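(* Let $G$ be a group with identity $e$, $A$ a set containing two distinct elements $0$ and $1$, $S \subseteq G$ finite with $e \in S$, and $r \in S \setminus \{e\}$. Let $p \in A^S$ be given by $p(r) = 1$ and $p(s) = 0$ for $s \in S \setminus\{r\}$, and let $\tau : A^G \to A^G$ be the lazy cellular automaton with minimal local map $\mu : A^S \to A$, unique active transition $p$ and writing symbol $\mu(p) = 1$. Then for any $n\geq 2$, $\mathrm{ord}(\tau) > n$ if and only if $r^j\notin S$ for all $2\leq j \leq n$.
   Context: $A^G$ is the set of maps $G \to A$ with shift action $(g\cdot x)(h) := x(hg)$. A cellular automaton is a map $\tau : A^G \to A^G$ with a finite $S \subseteq G$ and $\mu : A^S \to A$ such that $\tau(x)(g) = \mu((g\cdot x)|_S)$; the minimal local map is the local defining map on the neighborhood of smallest cardinality. $\tau$ is lazy with unique active transition $p \in A^S$ and writing symbol $\mu(p)$ if $e \in S$ and for all $z \in A^S$: $\mu(z) = z(e)$ iff $z \neq p$. $\tau^k$ is the $k$-fold composition, $\tau^0$ the identity; $\mathrm{ord}(\tau) := |\{\tau^k : k \in \mathbb{N}\}|$, $\mathbb{N}=\{0,1,\dots\}$. *)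

From Stdlib Require Import List Arith.
Import ListNotations.

Definition is_group {G : Type} (mul : G -> G -> G) (inv : G -> G) (e : G) : Prop :=
  (forall a b c, mul (mul a b) c = mul a (mul b c)) /\
  (forall a, mul e a = a) /\ (forall a, mul a e = a) /\
  (forall a, mul (inv a) a = e) /\ (forall a, mul a (inv a) = e).

Fixpoint gpow {G : Type} (mul : G -> G -> G) (e r : G) (j : nat) : G :=
  match j with
  | O => e
  | S j' => mul (gpow mul e r j') r
  end.

Definition finite_set {G : Type} (S : G -> Prop) : Prop :=
  exists l : list G, forall s, S s -> In s l.

Definition shift {G A : Type} (mul : G -> G -> G) (g : G) (x : G -> A) : G -> A :=
  fun h => x (mul h g).

Definition restr {G A : Type} (S : G -> Prop) (x : G -> A) : {s : G | S s} -> A :=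
  fun s => x (proj1_sig s).

Definition ca {G A : Type} (mul : G -> G -> G) (S : G -> Prop)
  (mu : ({s : G | S s} -> A) -> A) : (G -> A) -> (G -> A) :=
  fun x g => mu (restr S (shift mul g x)).

Definition is_lazy {G A : Type} (S : G -> Prop) (e : G) (He : S e)
  (mu : ({s : G | S s} -> A) -> A) (p : {s : G | S s} -> A) : Prop :=
  forall z, mu z = z (exist _ e He) <-> z <> p.

Fixpoint iter_map {X : Type} (k : nat) (tau : X -> X) : X -> X :=
  match k with
  | O => fun x => x
  | S k' => fun x => tau (iter_map k' tau x)
  end.

(* ord(tau) > n, i.e. |{tau^k : k in N}| > n (the set may be infinite):
   the set contains at least n+1 pairwise distinct elements *)
Definition ord_gt {X : Type} (tau : X -> X) (n : nat) : Prop :=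
  exists l : list (X -> X),
    length l = S n /\ NoDup l /\ forall f, In f l -> exists k, f = iter_map k tau.

(* The automaton only ever turns a 0 into a 1, at a cell g whose neighbour r g
   is a 1 while its other neighbours s g (s in S, including g itself) are 0s.
   So if g changes at time k + 1, then r g changed at time k (otherwise g was
   already active at time k), and by induction r^i g changed at time k + 1 - i.

   If r^j lies in S for some 2 <= j <= n, a change of g at time j - 1 gives a
   change of r^(j-1) g at time 0, making r^j g a 1 from time 1 on, whereas g
   active at time j - 1 needs r^j g to be a 0 (when r^j = r, instead
   r^(j-1) = e and g itself changed at time 0).  Hence tau^j = tau^(j-1) and
   the orbit has at most j <= n elements.

   Otherwise, starting from the indicator of e, the 1s after k <= n steps are
   exactly the cells r^-i with i <= k: the new cell r^-(k+1) is active because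
   a neighbour s r^-(k+1) with s <> r is a 1 only if s = r^d for some
   1 <= d <= k + 1, which S excludes.  So tau^0, ..., tau^n are distinct. *)
From Stdlib Require Import List Arith Lia.
From Stdlib Require Import Classical FunctionalExtensionality ClassicalEpsilon.

Section Group.

Context {G : Type} {mul : G -> G -> G} {inv : G -> G} {e : G}.
Hypothesis HG : is_group mul inv e.

Lemma mul_cancel_l a b c : mul a b = mul a c -> b = c.
Proof.
  destruct HG as (Hass & Hel & _ & Hinvl & _). intro H.
  rewrite <- (Hel b), <- (Hel c), <- (Hinvl a), !Hass, H. reflexivity.
Qed.

Lemma mul_cancel_r a b c : mul b a = mul c a -> b = c.
Proof.
  destruct HG as (Hass & _ & Her & _ & Hinvr). intro H.
  rewrite <- (Her b), <- (Her c), <- (Hinvr a), <- !Hass, H. reflexivity.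
Qed.

Lemma gpow_add r i j : gpow mul e r (i + j) = mul (gpow mul e r i) (gpow mul e r j).
Proof.
  destruct HG as (Hass & _ & Her & _ & _).
  induction j as [|j IHj]; simpl.
  - rewrite Nat.add_0_r, Her. reflexivity.
  - rewrite Nat.add_succ_r. simpl. rewrite IHj, Hass. reflexivity.
Qed.

Lemma gpow_succ_l r i : mul r (gpow mul e r i) = gpow mul e r (S i).
Proof.
  destruct HG as (_ & Hel & _ & _ & _).
  rewrite <- Nat.add_1_l, gpow_add. simpl. rewrite Hel. reflexivity.
Qed.

Lemma gpow_sub r i k a :
  i <= k -> mul (gpow mul e r i) a = gpow mul e r k -> a = gpow mul e r (k - i).
Proof.
  intros Hik H. apply (mul_cancel_l (gpow mul e r i)).
  rewrite <- gpow_add, Nat.add_comm, Nat.sub_add by exact Hik. exact H.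
Qed.

End Group.

Section Orbit.

Context {X : Type} (tau : X -> X).

Lemma iter_map_stationary m k :
  iter_map (S m) tau = iter_map m tau -> m <= k -> iter_map k tau = iter_map m tau.
Proof.
  intros Hm Hk. replace k with ((k - m) + m) by lia.
  induction (k - m) as [|d IHd]; [reflexivity|].
  cbn [Nat.add iter_map]. rewrite IHd. exact Hm.
Qed.

Lemma ord_gt_stationary m n :
  iter_map (S m) tau = iter_map m tau -> ord_gt tau n -> n <= m.
Proof.
  intros Hm (l & Hlen & Hnd & Hl).
  assert (Hincl : incl l (map (fun k => iter_map k tau) (seq 0 (S m)))).
  { intros f Hf. destruct (Hl f Hf) as [k ->]. apply in_map_iff.
    destruct (le_lt_dec m k) as [Hk|Hk].
    - exists m. split; [symmetry; exact (iter_map_stationary m k Hm Hk)|].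
      apply in_seq. lia.
    - exists k. split; [reflexivity|]. apply in_seq. lia. }
  pose proof (NoDup_incl_length Hnd Hincl) as Hle.
  rewrite length_map, length_seq in Hle. lia.
Qed.

Lemma ord_gt_of_distinct n :
  (forall k k', k < k' <= n -> iter_map k tau <> iter_map k' tau) -> ord_gt tau n.
Proof.
  intro Hdist. exists (map (fun k => iter_map k tau) (seq 0 (S n))).
  split; [rewrite length_map, length_seq; reflexivity|]. split.
  - apply NoDup_map_NoDup_ForallPairs; [|apply seq_NoDup].
    intros k k' Hk Hk' Heq. apply in_seq in Hk, Hk'.
    destruct (lt_eq_lt_dec k k') as [[Hlt|Heq']|Hlt]; [|exact Heq'|].
    + exfalso. apply (Hdist k k'); [lia|exact Heq].
    + exfalso. apply (Hdist k' k); [lia|symmetry; exact Heq].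
  - intros f Hf. apply in_map_iff in Hf. destruct Hf as (k & <- & _). exists k. reflexivity.
Qed.

End Orbit.

Section LazyAutomaton.

Context {G : Type} {mul : G -> G -> G} {inv : G -> G} {e : G}.
Hypothesis HG : is_group mul inv e.
Context {A : Type} {a0 a1 : A}.
Hypothesis Ha01 : a0 <> a1.
Context {nbhd : G -> Prop} (He : nbhd e) {r : G} (Hr : nbhd r).
Hypothesis Hre : r <> e.
Context {p : {s : G | nbhd s} -> A}.
Hypothesis Hp : forall s : {s : G | nbhd s},
  (proj1_sig s = r -> p s = a1) /\ (proj1_sig s <> r -> p s = a0).
Context {mu : ({s : G | nbhd s} -> A) -> A}.
Hypothesis Hlazy : is_lazy nbhd e He mu p.
Hypothesis Hmup : mu p = a1.

Local Notation tau := (ca mul nbhd mu).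
Local Notation gpow := (gpow mul e r).

Definition active (y : G -> A) (g : G) : Prop := restr nbhd (shift mul g y) = p.

Lemma active_iff y g :
  active y g <-> y (mul r g) = a1 /\ (forall s, nbhd s -> s <> r -> y (mul s g) = a0).
Proof.
  split.
  - intro H. split.
    + change (restr nbhd (shift mul g y) (exist _ r Hr) = a1).
      rewrite H. apply Hp. reflexivity.
    + intros s Hs Hsr. change (restr nbhd (shift mul g y) (exist _ s Hs) = a0).
      rewrite H. apply Hp. exact Hsr.
  - intros [H1 H0]. apply functional_extensionality. intros [s Hs].
    unfold restr, shift. simpl. destruct (classic (s = r)) as [->|Hsr].
    + rewrite (proj1 (Hp (exist _ r Hs)) eq_refl). exact H1.
    + rewrite (proj2 (Hp (exist _ s Hs)) Hsr). exact (H0 s Hs Hsr).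
Qed.

Lemma active_a0 y g : active y g -> y g = a0.
Proof.
  destruct HG as (_ & Hel & _). intro H.
  rewrite <- (Hel g). apply (active_iff y g); [exact H|exact He|].
  intro Her. apply Hre. symmetry. exact Her.
Qed.

Lemma ca_active y g : active y g -> tau y g = a1.
Proof. intro H. unfold ca. fold (active y g). rewrite H. exact Hmup. Qed.

Lemma ca_inactive y g : ~ active y g -> tau y g = y g.
Proof.
  destruct HG as (_ & Hel & _). intro H.
  unfold ca. rewrite (proj2 (Hlazy _) H). unfold restr, shift. simpl.
  rewrite Hel. reflexivity.
Qed.

Lemma ca_a1 y g : y g = a1 -> tau y g = a1.
Proof.
  intro H. destruct (classic (active y g)) as [Ha|Ha].
  - exact (ca_active y g Ha).
  - rewrite ca_inactive by exact Ha. exact H.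
Qed.

Lemma ca_a0 y g : tau y g = a0 -> y g = a0.
Proof.
  intro H. destruct (classic (active y g)) as [Ha|Ha].
  - exfalso. apply Ha01. rewrite <- H. exact (ca_active y g Ha).
  - rewrite <- (ca_inactive y g Ha). exact H.
Qed.

Lemma iter_ca_a1 x t t' g :
  t <= t' -> iter_map t tau x g = a1 -> iter_map t' tau x g = a1.
Proof.
  intros Ht H. induction Ht as [|t' _ IH]; [exact H|].
  exact (ca_a1 _ g IH).
Qed.

Definition changes (x : G -> A) (k : nat) (g : G) : Prop :=
  iter_map (S k) tau x g <> iter_map k tau x g.

Lemma changes_active x k g : changes x k g -> active (iter_map k tau x) g.
Proof. intro H. apply NNPP. intro Hna. exact (H (ca_inactive _ g Hna)). Qed.

Lemma changes_succ x k g : changes x (S k) g -> changes x k (mul r g).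
Proof.
  intros Hch Hsame. set (y := iter_map k tau x) in *.
  destruct (proj1 (active_iff _ g) (changes_active x (S k) g Hch)) as [H1 H0].
  assert (Hy : active y g).
  { apply active_iff. split.
    - rewrite <- Hsame. exact H1.
    - intros s Hs Hsr. apply ca_a0. exact (H0 s Hs Hsr). }
  apply Ha01. rewrite <- (active_a0 _ g (changes_active x (S k) g Hch)).
  exact (ca_active y g Hy).
Qed.

Lemma changes_gpow x i k g : changes x (i + k) g -> changes x k (mul (gpow i) g).
Proof.
  destruct HG as (Hass & Hel & _).
  revert g. induction i as [|i IHi]; intros g Hch.
  - simpl. rewrite Hel. exact Hch.
  - simpl gpow. rewrite Hass. apply IHi, changes_succ. exact Hch.
Qed.

Lemma ca_stationary_of_gpow m :
  nbhd (gpow (S (S m))) -> iter_map (S (S m)) tau = iter_map (S m) tau.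
Proof.
  destruct HG as (Hass & Hel & _). intro Hpow.
  apply functional_extensionality. intro x. apply functional_extensionality. intro g.
  apply NNPP. intro Hch. fold (changes x (S m) g) in Hch.
  pose proof (changes_active x _ g Hch) as Hact.
  assert (Hact0 : active x (mul (gpow (S m)) g)).
  { apply (changes_active x 0), changes_gpow. rewrite Nat.add_0_r. exact Hch. }
  destruct (classic (gpow (S (S m)) = r)) as [Hpr|Hpr].
  - assert (Hpe : gpow (S m) = e).
    { apply (mul_cancel_r HG r). rewrite Hel. exact Hpr. }
    rewrite Hpe, Hel in Hact0.
    apply Ha01. rewrite <- (active_a0 _ g Hact).
    apply (iter_ca_a1 x 1); [lia|]. exact (ca_active x g Hact0).
  - apply Ha01. rewrite <- (proj2 (proj1 (active_iff _ g) Hact) _ Hpow Hpr).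
    apply (iter_ca_a1 x 0); [lia|].
    cbn [iter_map]. rewrite <- (gpow_succ_l HG), Hass.
    exact (proj1 (proj1 (active_iff x _) Hact0)).
Qed.

Section NoShortPowers.

Variable n : nat.
Hypothesis Hno_pow : forall j, 2 <= j <= n -> ~ nbhd (gpow j).

Lemma gpow_in_nbhd d : 1 <= d <= n -> nbhd (gpow d) -> gpow d = r.
Proof.
  destruct HG as (_ & Hel & _). intros Hd Hs.
  destruct (Nat.eq_dec d 1) as [->|Hd1].
  - simpl. apply Hel.
  - exfalso. exact (Hno_pow d ltac:(lia) Hs).
Qed.

Definition reached (k : nat) (h : G) : Prop := exists i, i <= k /\ mul (gpow i) h = e.

Definition is_indicator (P : G -> Prop) (y : G -> A) : Prop :=
  (forall h, P h -> y h = a1) /\ (forall h, ~ P h -> y h = a0).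

Lemma active_at_reached_succ k y h :
  S k <= n -> is_indicator (reached k) y -> mul (gpow (S k)) h = e -> active y h.
Proof.
  destruct HG as (Hass & _). intros Hk [Hy1 Hy0] Hh. apply active_iff. split.
  - apply Hy1. exists k. split; [lia|]. rewrite <- Hass. exact Hh.
  - intros s Hs Hsr. apply Hy0. intros (i & Hi & Hsh). apply Hsr.
    assert (Hpow : mul (gpow i) s = gpow (S k)).
    { apply (mul_cancel_r HG h). rewrite Hass, Hsh, Hh. reflexivity. }
    apply (gpow_sub HG) in Hpow; [|lia]. subst s.
    apply gpow_in_nbhd; [lia|exact Hs].
Qed.

Lemma inactive_off_reached_succ k y h :
  is_indicator (reached k) y -> ~ reached (S k) h -> ~ active y h.
Proof.
  destruct HG as (Hass & _). intros [_ Hy0] Hh Hact.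
  apply Ha01. rewrite <- (proj1 (proj1 (active_iff y h) Hact)). symmetry. apply Hy0.
  intros (i & Hi & Hrh). apply Hh. exists (S i). split; [lia|].
  simpl. rewrite Hass. exact Hrh.
Qed.

Lemma reached_mono k k' h : k <= k' -> reached k h -> reached k' h.
Proof. intros Hk (i & Hi & Hh). exists i. split; [lia|exact Hh]. Qed.

Lemma ca_is_indicator_reached k y :
  S k <= n -> is_indicator (reached k) y -> is_indicator (reached (S k)) (tau y).
Proof.
  intros Hk Hy. split; intros h Hh.
  - destruct (classic (reached k h)) as [Hold|Hnew].
    + apply ca_a1, (proj1 Hy), Hold.
    + apply ca_active, (active_at_reached_succ k); [exact Hk|exact Hy|].
      destruct Hh as (i & Hi & Hih).
      destruct (Nat.eq_dec i (S k)) as [<-|Hne]; [exact Hih|].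
      exfalso. apply Hnew. exists i. split; [lia|exact Hih].
  - rewrite ca_inactive by exact (inactive_off_reached_succ k y h Hy Hh).
    apply (proj2 Hy). intro Hold. exact (Hh (reached_mono k (S k) h ltac:(lia) Hold)).
Qed.

Definition delta_e (h : G) : A := if excluded_middle_informative (h = e) then a1 else a0.

Lemma iter_ca_delta_e k : k <= n -> is_indicator (reached k) (iter_map k tau delta_e).
Proof.
  destruct HG as (_ & Hel & _).
  induction k as [|k IHk]; intro Hk.
  - split; intros h Hh; simpl; unfold delta_e;
      destruct (excluded_middle_informative (h = e)) as [Hhe|Hhe]; try reflexivity.
    + exfalso. destruct Hh as (i & Hi & Hih). apply Hhe.
      replace i with 0 in Hih by lia. simpl in Hih. rewrite Hel in Hih. exact Hih.
    + exfalso. apply Hh. exists 0. split; [lia|]. simpl. rewrite Hel. exact Hhe.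
  - apply ca_is_indicator_reached; [exact Hk|]. apply IHk. lia.
Qed.

Lemma iter_ca_distinct k k' : k < k' <= n -> iter_map k tau <> iter_map k' tau.
Proof.
  destruct HG as (_ & _ & Her & _ & Hinvr). intros Hkk' Heq.
  set (h := inv (gpow k')).
  assert (Hnot : ~ reached k h).
  { intros (i & Hi & Hih). apply Hre. symmetry.
    assert (Hpow : mul (gpow i) e = gpow k').
    { apply (mul_cancel_r HG h). unfold h. rewrite Hinvr, Her. exact Hih. }
    apply (gpow_sub HG) in Hpow; [|lia].
    rewrite Hpow. apply gpow_in_nbhd; [lia|]. rewrite <- Hpow. exact He. }
  apply Ha01.
  rewrite <- (proj2 (iter_ca_delta_e k ltac:(lia)) h Hnot), Heq.
  apply (proj1 (iter_ca_delta_e k' ltac:(lia))). exists k'. split; [lia|apply Hinvr].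
Qed.

End NoShortPowers.

End LazyAutomaton.

Theorem proposition3
  (G : Type) (mul : G -> G -> G) (inv : G -> G) (e : G)
  (HG : is_group mul inv e)
  (A : Type) (a0 a1 : A) (Ha01 : a0 <> a1)
  (S : G -> Prop) (HSfin : finite_set S) (HeS : S e)
  (r : G) (HrS : S r) (Hre : r <> e)
  (p : {s : G | S s} -> A)
  (Hp : forall s : {s : G | S s},
          (proj1_sig s = r -> p s = a1) /\ (proj1_sig s <> r -> p s = a0))
  (mu : ({s : G | S s} -> A) -> A)
  (Hlazy : is_lazy S e HeS mu p) (Hmup : mu p = a1)
  (n : nat) (Hn : 2 <= n) :
  ord_gt (ca mul S mu) n <->
  (forall j : nat, 2 <= j <= n -> ~ S (gpow mul e r j)).
Proof.
  split.
  - intros Hord j Hj Hpow.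
    destruct j as [|[|m]]; [lia|lia|].
    pose proof (ca_stationary_of_gpow HG Ha01 HeS HrS Hre Hp Hlazy Hmup m Hpow) as Hstat.
    pose proof (ord_gt_stationary _ _ _ Hstat Hord). lia.
  - intro Hno_pow. apply ord_gt_of_distinct.
    exact (iter_ca_distinct HG Ha01 HeS HrS Hre Hp Hlazy Hmup n Hno_pow).
Qed.
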